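(* For any positive integer $T$, $x \in \{0,1\}^T$ and $p \in [0,1]^T$, $\mathsf{CalDist}(x,p) \le \mathsf{ECE}(x,p)$.
   Context: $\mathsf{ECE}(x,p) = \sum_{\alpha \in [0,1]} \left|\sum_{t=1}^T (x_t - p_t)\mathbf{1}[p_t = \alpha]\right|$ (only finitely many nonzero summands). For $x \in \{0,1\}^T$, let $\mathcal{C}(x) = \{q \in [0,1]^T : \sum_{t=1}^T (x_t - q_t)\mathbf{1}[q_t = \alpha] = 0 \text{ for all } \alpha \in [0,1]\}$ and $\mathsf{CalDist}(x,p) = \min_{q \in \mathcal{C}(x)} \|p-q\|_1$. *)

From HB Require Import structures.
From mathcomp Require Import all_boot all_order all_algebra.
From mathcomp Require Import boolp classical_sets reals.
Set Implicit Arguments. Unset Strict Implicit. Unset Printing Implicit Defensive.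
Import Order.TTheory GRing.Theory Num.Theory.
Local Open Scope ring_scope.
Local Open Scope classical_set_scope.

Definition binary (R : realType) (T : nat) (x : 'I_T -> R) : Prop :=
  forall t, x t = 0 \/ x t = 1.

Definition unit_vec (R : realType) (T : nat) (p : 'I_T -> R) : Prop :=
  forall t, 0 <= p t <= 1.

Definition bias_at (R : realType) (T : nat) (x p : 'I_T -> R) (a : R) : R :=
  \sum_(t < T | p t == a) (x t - p t).

(* ECE(x,p) = sum over alpha in [0,1] of |bias_at alpha|; only the finitely
   many values alpha taken by p can give a nonzero summand, so we sum over the
   distinct values of p. *)
Definition ECE (R : realType) (T : nat) (x p : 'I_T -> R) : R :=
  \sum_(a <- undup [seq p t | t <- enum 'I_T]) `|bias_at x p a|.

Definition calibrated (R : realType) (T : nat) (x q : 'I_T -> R) : Prop :=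
  unit_vec q /\ forall a : R, 0 <= a <= 1 -> bias_at x q a = 0.

Definition l1dist (R : realType) (T : nat) (p q : 'I_T -> R) : R :=
  \sum_(t < T) `|p t - q t|.

(* CalDist(x,p) = min_{q in C(x)} ||p - q||_1, formalized as the infimum of the
   set of attained distances (the paper asserts the min is attained). *)
Definition CalDist (R : realType) (T : nat) (x p : 'I_T -> R) : R :=
  inf [set d : R | exists q, calibrated x q /\ d = l1dist p q].

From HB Require Import structures.
From mathcomp Require Import all_boot all_order all_algebra.
From mathcomp Require Import boolp classical_sets reals.
Import Order.TTheory GRing.Theory Num.Theory.
Local Open Scope ring_scope.
Set Implicit Arguments. Unset Strict Implicit.

(* Replace each prediction p_t by the empirical frequency of outcomes on its
   level set {s | p_s = p_t}.  Every level set of the new predictor q is a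
   union of level sets of p, on each of which the bias of q vanishes, so q is
   calibrated.  On the level set of a value a with n_a elements, q moves every
   prediction by the same amount |mean - a|, for a total of
   n_a |mean - a| = |bias_at x p a|; summing over a gives ||p - q||_1 = ECE. *)

Section Recalibration.
Variables (R : realType) (T : nat).
Implicit Types (x p : 'I_T -> R) (a : R).

Definition values p : seq R := undup [seq p t | t <- enum 'I_T].

Lemma mem_values p t : p t \in values p.
Proof. by rewrite mem_undup map_f ?mem_enum. Qed.

Lemma valuesP p a : a \in values p -> exists t, a = p t.
Proof. by rewrite mem_undup => /mapP[t _ ->]; exists t. Qed.

Lemma sum_by_level p (P : pred R) (f : 'I_T -> R) :
  \sum_(t | P (p t)) f t = \sum_(a <- values p | P a) \sum_(t | p t == a) f t.
Proof.
rewrite (exchange_big_dep (fun t => P (p t))) /=; last by move=> a t Pa /eqP ->.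
apply: eq_bigr => t Pt; rewrite -big_filter.
have -> : [seq a <- values p | P a && (p t == a)] = [:: p t].
  rewrite -(filter_pred1_uniq (undup_uniq _) (mem_values p t)).
  apply: eq_filter => a /=; rewrite eq_sym.
  by case: eqVneq => [->|_]; rewrite ?Pt ?andbF.
by rewrite big_seq1.
Qed.

Definition level_count p a : nat := #|[pred t | p t == a]|.

(* Division by zero on an empty level set is harmless: only values of [p]
   are ever used. *)
Definition level_mean x p a : R :=
  (\sum_(t | p t == a) x t) / (level_count p a)%:R.

Definition recalibrate x p : 'I_T -> R := fun t => level_mean x p (p t).

Lemma sum_level_const p a (c : R) : \sum_(t | p t == a) c = c *+ level_count p a.
Proof. exact: sumr_const. Qed.

Lemma level_count_gt0 p t : (0 < level_count p (p t))%N.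
Proof. by apply/card_gt0P; exists t; rewrite inE. Qed.

Lemma level_meanMn x p t :
  level_mean x p (p t) *+ level_count p (p t) = \sum_(s | p s == p t) x s.
Proof.
by rewrite -mulr_natr divfK // pnatr_eq0 -lt0n level_count_gt0.
Qed.

Lemma level_mean_unit x p t : unit_vec x -> 0 <= level_mean x p (p t) <= 1.
Proof.
move=> hx; have n_gt0 : 0 < (level_count p (p t))%:R :> R.
  by rewrite ltr0n level_count_gt0.
apply/andP; split.
  apply: divr_ge0; last exact: ltW.
  by apply: sumr_ge0 => s _; case/andP: (hx s).
rewrite ler_pdivrMr // mul1r -sum_level_const.
by apply: ler_sum => s _; case/andP: (hx s).
Qed.

Lemma bias_level_mean x p t :
  \sum_(s | p s == p t) (x s - level_mean x p (p t)) = 0.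
Proof. by rewrite sumrB sum_level_const level_meanMn subrr. Qed.

Lemma bias_at_recalibrate x p a : bias_at x (recalibrate x p) a = 0.
Proof.
rewrite /bias_at (sum_by_level p (fun b => level_mean x p b == a)).
rewrite big_seq_cond big1 // => b /andP[/valuesP[t ->] _].
rewrite -[RHS](bias_level_mean x p t) /recalibrate.
by apply: eq_bigr => s /eqP ->.
Qed.

Lemma calibrated_recalibrate x p : unit_vec x -> calibrated x (recalibrate x p).
Proof.
move=> hx; split=> [t|a _]; first exact: level_mean_unit.
exact: bias_at_recalibrate.
Qed.

Lemma bias_at_level_mean x p t :
  bias_at x p (p t) = (level_mean x p (p t) - p t) *+ level_count p (p t).
Proof.
rewrite /bias_at mulrnBl level_meanMn -sum_level_const -sumrB.
by apply: eq_bigr => s /eqP ->.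
Qed.

Lemma l1dist_recalibrate x p : l1dist p (recalibrate x p) = ECE x p.
Proof.
rewrite /l1dist (sum_by_level p xpredT) /ECE !big_seq.
apply: eq_bigr => _ /valuesP[t ->]; rewrite bias_at_level_mean normrMn distrC.
rewrite -sum_level_const /recalibrate.
by apply: eq_bigr => s /eqP ->.
Qed.

Lemma CalDist_le_l1dist x p q : calibrated x q -> CalDist x p <= l1dist p q.
Proof.
move=> qcal; apply: ge_inf; last by exists q.
by exists 0 => _ [q' [_ ->]]; apply: sumr_ge0 => t _; exact: normr_ge0.
Qed.

End Recalibration.

Lemma binary_unit_vec (R : realType) (T : nat) (x : 'I_T -> R) :
  binary x -> unit_vec x.
Proof. by move=> hx t; case: (hx t) => ->; rewrite lexx ler01. Qed.

Theorem proposition3 (R : realType) (T : nat) (hT : (0 < T)%N)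
  (x p : 'I_T -> R) (hx : binary x) (hp : unit_vec p) :
  CalDist x p <= ECE x p.
Proof.
rewrite -(l1dist_recalibrate x p).
exact/CalDist_le_l1dist/calibrated_recalibrate/binary_unit_vec.
Qed.
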